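(* Let $\mathcal{A}\subset\mathbb{C}$ be a finite transmit alphabet, let $M_t,M_r\ge 1$, $\nu\ge 0$, $T>\nu$ be integers, and let $q\in\{1,\dots,M_t\}$. Let $\mathcal{C}$ be a code whose codewords are complex matrices $\mathbf{X}^{(1)}=[\mathbf{x}[0],\dots,\mathbf{x}[T-\nu-1],\mathbf{0},\dots,\mathbf{0}]\in\mathbb{C}^{M_t\times T}$ with $\mathbf{x}[n]\in\mathcal{A}^{M_t}$ for $0\le n\le T-\nu-1$ and last $\nu$ columns equal to zero. Suppose the diversity order of $\mathcal{C}$ over the $(\nu+1)$-tap ISI channel with $M_r$ receive antennas is $q(\nu+1)M_r$, i.e. $M_r\min_{\mathbf{X}_1^{(1)}\neq\mathbf{X}_2^{(1)}\in\mathcal{C}}\operatorname{rank}_{\mathbb{C}}\big(\Theta(\mathbf{X}_1^{(1)})-\Theta(\mathbf{X}_2^{(1)})\big)=q(\nu+1)M_r$. Then the rate $R=\frac{1}{T}\log_{|\mathcal{A}|}|\mathcal{C}|$ (in symbols per transmission) satisfies $R\le M_t-q+1$.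
   Context: For a matrix $\mathbf{X}^{(1)}=[\mathbf{x}[0],\dots,\mathbf{x}[T-\nu-1],\mathbf{0},\dots,\mathbf{0}]\in\mathbb{C}^{M_t\times T}$ (last $\nu$ columns zero), $\Theta(\mathbf{X}^{(1)})\in\mathbb{C}^{(\nu+1)M_t\times T}$ is the block-Toeplitz matrix with $\nu+1$ block rows, where block row $i$ ($i=0,\dots,\nu$) is $\mathbf{X}^{(1)}$ with its columns shifted right by $i$ positions (i.e. block row $i$ equals $[\mathbf{0},\dots,\mathbf{0},\mathbf{x}[0],\dots,\mathbf{x}[T-\nu-1],\mathbf{0},\dots,\mathbf{0}]$ with $i$ leading zero columns and $\nu-i$ trailing zero columns). This is the equivalent codeword seen through the channel $\mathbf{Y}=[\mathbf{H}_0,\dots,\mathbf{H}_\nu]\Theta(\mathbf{X}^{(1)})+\mathbf{Z}$, and the diversity order of a code is $M_r$ times the minimum rank of differences of these equivalent codewords. *)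

From HB Require Import structures.
From mathcomp Require Import all_boot all_order all_algebra.
From mathcomp Require Import complex.
From mathcomp Require Import all_classical all_reals exp.
Set Implicit Arguments. Unset Strict Implicit. Unset Printing Implicit Defensive.
Import Order.TTheory GRing.Theory Num.Theory.
Local Open Scope ring_scope.
Local Open Scope complex_scope.

Definition shiftr_cols (F : pzRingType) (m T : nat) (i : nat) (X : 'M[F]_(m, T))
  : 'M[F]_(m, T) :=
  \matrix_(r < m, j < T) if (i <= j)%N then X r (insubd j (j - i)%N) else 0.

Definition Theta (F : pzRingType) (m T nu : nat) (X : 'M[F]_(m, T)) :=
  \mxcol_(i < nu.+1) shiftr_cols i X.
Arguments Theta {F m T} nu X.

Definition isi_codeword (F : pzRingType) (A : seq F) (m T nu : nat)
  (X : 'M[F]_(m, T)) : Prop :=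
  forall (r : 'I_m) (j : 'I_T),
    ((j < T - nu)%N -> X r j \in A) /\ ((T - nu <= j)%N -> X r j = 0).
Arguments isi_codeword {F} A {m T} nu X.

Definition is_min_rank_diff (F : fieldType) (m T nu : nat)
  (code : seq 'M[F]_(m, T)) (d : nat) : Prop :=
  (exists X1, exists X2, [/\ X1 \in code, X2 \in code, X1 != X2 &
       \rank (Theta nu X1 - Theta nu X2)%R = d]) /\
  (forall X1 X2, X1 \in code -> X2 \in code -> X1 != X2 ->
       (d <= \rank (Theta nu X1 - Theta nu X2)%R)%N).
Arguments is_min_rank_diff {F m T} nu code d.

Definition code_rate (R : realType) (Asize Csize T : nat) : R :=
  (ln (Csize%:R : R) / ln (Asize%:R : R)) / T%:R.

(* Split the Mt transmit antennas into the first k = Mt - q + 1 and the last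
   l = q - 1.  Theta is linear and each of its block rows is a column shift,
   i.e. a right multiple, of its argument; so if two codewords agree on their
   first k rows, the difference of their equivalent codewords has rank at most
   (nu + 1) l < q (nu + 1).  Hence a code of diversity q (nu + 1) Mr is
   determined by the first k rows of its codewords, which carry only
   k (T - nu) symbols of A; thus |C| <= |A|^(k T), i.e. R <= k. *)

From HB Require Import structures.
From mathcomp Require Import all_boot all_order all_algebra.
From mathcomp Require Import complex.
From mathcomp Require Import all_classical all_reals exp.
From mathcomp Require Import zify.
Set Implicit Arguments. Unset Strict Implicit. Unset Printing Implicit Defensive.
Import Order.TTheory GRing.Theory Num.Theory.
Local Open Scope ring_scope.
Local Open Scope complex_scope.

Section ColumnShift.

Variables (F : pzRingType) (m T : nat).

Definition shift_mx (i : nat) : 'M[F]_T := \matrix_(j, j') ((j + i)%N == j')%:R.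

Lemma shiftr_cols_mul i (X : 'M[F]_(m, T)) : shiftr_cols i X = X *m shift_mx i.
Proof.
apply/matrixP => r j'; rewrite !mxE.
under eq_bigr => j _ do rewrite mxE mulr_natr mulrb.
case: leqP => [le_ij' | lt_j'i].
- have lt_j'iT : (j' - i < T)%N by apply: leq_ltn_trans (leq_subr _ _) _.
  rewrite (bigD1 (Ordinal lt_j'iT)) //= subnK // eqxx big1 ?addr0.
    by congr (X r _); apply: val_inj; rewrite /= insubdK.
  move=> j /eqP ne_j; case: eqP => // ej.
  by case: ne_j; apply: val_inj => /=; lia.
- by rewrite big1 // => j _; case: eqP => //= ej; lia.
Qed.

Lemma shiftr_colsB i (X Y : 'M[F]_(m, T)) :
  shiftr_cols i X - shiftr_cols i Y = shiftr_cols i (X - Y).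
Proof. by rewrite !shiftr_cols_mul mulmxBl. Qed.

End ColumnShift.

Lemma ThetaB (F : pzRingType) m T nu (X Y : 'M[F]_(m, T)) :
  Theta nu X - Theta nu Y = Theta nu (X - Y).
Proof.
by rewrite /Theta -mxcolB; apply: eq_mxcol => i; rewrite shiftr_colsB.
Qed.

Lemma mxrank_mxcol_le (F : fieldType) p (p_ : 'I_p -> nat) n
    (V_ : forall i, 'M[F]_(p_ i, n)) b :
  (forall i, \rank (V_ i) <= b)%N -> (\rank (\mxcol_i V_ i) <= p * b)%N.
Proof.
move=> rankV; rewrite (eqmx_col V_).
have -> : (p * b = \sum_(i < p) b)%N by rewrite sum_nat_const card_ord.
elim/big_ind2: _ => [|s1 S1 s2 S2 le1 le2|i _]; first by rewrite mxrank0.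
- exact: leq_trans (mxrank_adds_leqif S1 S2) (leq_add le1 le2).
- by rewrite genmxE.
Qed.

Lemma mxrank_Theta_le (F : fieldType) m T nu (X : 'M[F]_(m, T)) :
  (\rank (Theta nu X) <= nu.+1 * \rank X)%N.
Proof.
by apply: mxrank_mxcol_le => i; rewrite shiftr_cols_mul mxrankM_maxl.
Qed.

Lemma mxrank_usubmx0_le (F : fieldType) k l n (M : 'M[F]_(k + l, n)) :
  usubmx M = 0 -> (\rank M <= l)%N.
Proof. by move=> M0; rewrite -(vsubmxK M) M0 rank_col_0mx rank_leq_row. Qed.

Lemma usubmx_inj_of_min_rank (F : fieldType) k l T nu
    (code : seq 'M[F]_(k + l, T)) d :
  is_min_rank_diff nu code d -> (nu.+1 * l < d)%N ->
  {in code &, injective (@usubmx F k l T)}.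
Proof.
move=> [_ min_rank] lt_d X1 X2 X1code X2code eq_up.
apply/eqP; apply: contraT => neX.
have rank_le : (\rank (Theta nu (X1 - X2)) <= nu.+1 * l)%N.
  apply: leq_trans (mxrank_Theta_le nu (X1 - X2)) _.
  by rewrite leq_mul2l mxrank_usubmx0_le ?orbT // linearB /= eq_up subrr.
have := min_rank _ _ X1code X2code neX.
rewrite ThetaB => /leq_trans/(_ rank_le).
by rewrite leqNgt lt_d.
Qed.

Lemma size_code_le (F : fieldType) (A : seq F) k l T nu
    (code : seq 'M[F]_(k + l, T)) :
  (0 < size A)%N -> uniq code ->
  (forall X, X \in code -> isi_codeword A nu X) ->
  {in code &, injective (@usubmx F k l T)} ->
  (size code <= size A ^ (k * (T - nu)))%N.
Proof.
move=> A_gt0 code_uniq codeword up_inj.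
have le_nT : (T - nu <= T)%N by apply: leq_subr.
pose a := (size A).-1.
pose g (X : 'M[F]_(k + l, T)) : {ffun 'I_k * 'I_(T - nu) -> 'I_a.+1} :=
  [ffun p => inord (index (usubmx X p.1 (widen_ord le_nT p.2)) A)].
have g_inj : {in code &, injective g}.
  move=> X1 X2 X1code X2code /ffunP eq_g; apply: up_inj => //.
  apply/matrixP => r j; rewrite !mxE.
  have [lt_j | le_j] := ltnP j (T - nu); last first.
    by rewrite (codeword X1 _ _ _).2 // (codeword X2 _ _ _).2.
  have /(congr1 val) := eq_g (r, Ordinal lt_j); rewrite !ffunE /= !mxE.
  have -> : widen_ord le_nT (Ordinal lt_j) = j by apply: val_inj.
  have inA1 := (codeword X1 X1code (lshift l r) j).1 lt_j.
  have inA2 := (codeword X2 X2code (lshift l r) j).1 lt_j.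
  rewrite !inordK ?prednK ?index_mem // => eq_index.
  by rewrite -(nth_index 0 inA1) eq_index (nth_index 0 inA2).
rewrite -(size_map g) -(card_uniqP _); last by rewrite map_inj_in_uniq.
apply: leq_trans (max_card _) _.
by rewrite card_ffun card_prod !card_ord prednK.
Qed.

Lemma code_rate_le (R : realType) (a c T k n : nat) :
  (c <= a ^ (k * n))%N -> (n <= T)%N -> code_rate R a c T <= k%:R.
Proof.
move=> le_c le_nT; rewrite /code_rate.
have [le_a1 | lt_1a] := leqP a 1.
  suff -> : ln (a%:R : R) = 0 by rewrite invr0 mulr0 mul0r ler0n.
  by case: a le_c le_a1 => [|[|]] // _ _; rewrite ?ln1 ?ln0.
have [->|c_gt0] := posnP c; first by rewrite ln0 ?mul0r.
have lnA_gt0 : (0 : R) < ln a%:R by rewrite ln_gt0 // ltr1n.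
have [->|T_gt0] := posnP T; first by rewrite invr0 mulr0 ler0n.
rewrite -(ltr0n R) in T_gt0.
rewrite ler_pdivrMr // ler_pdivrMr //.
apply: (@le_trans _ _ (ln ((a%:R : R) ^+ (k * n)))).
  rewrite ler_ln ?posrE ?exprn_gt0 ?ltr0n -?natrX ?ler_nat //; lia.
rewrite lnXn ?ltr0n; last by lia.
rewrite -[ln _ *+ _]mulr_natl ler_wpM2r ?(ltW lnA_gt0) //.
by rewrite -natrM ler_nat leq_mul.
Qed.

Theorem lemma1 (R : realType) (A : seq R[i]) (Mt Mr nu T q : nat)
  (code : seq 'M[R[i]]_(Mt, T)) :
  uniq A -> (1 <= Mt)%N -> (1 <= Mr)%N -> (nu < T)%N ->
  (1 <= q)%N -> (q <= Mt)%N ->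
  uniq code ->
  (forall X, X \in code -> isi_codeword A nu X) ->
  (exists d, is_min_rank_diff nu code d /\ (Mr * d = q * nu.+1 * Mr)%N) ->
  code_rate R (size A) (size code) T <= (Mt - q + 1)%:R.
Proof.
move=> _ _ Mr_gt0 _ q_gt0 le_qMt code_uniq codeword [d [min_d diversity]].
have d_eq : d = (q * nu.+1)%N.
  by apply/eqP; rewrite -(eqn_pmul2l Mr_gt0) diversity mulnC.
have [k [l [def_Mt def_q]]] : exists k l, Mt = (k + l)%N /\ q = l.+1.
  by exists (Mt - q.-1)%N, q.-1; split; lia.
subst Mt q; have -> : (k + l - l.+1 + 1 = k)%N by lia.
have up_inj : {in code &, injective (@usubmx _ k l T)}.
  apply: usubmx_inj_of_min_rank min_d _.
  by rewrite d_eq [X in (_ < X)%N]mulnC ltn_pmul2l.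
have [A0 | A_gt0] := posnP (size A).
  by rewrite /code_rate A0 (ln0 (lexx 0)) invr0 mulr0 mul0r.
apply: code_rate_le (leq_subr nu T).
exact: size_code_le.
Qed.
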